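(* Let $P\in\mathbb{R}_+^{n\times n}$ be sub-stochastic, $w\in\mathbb{R}^n_+$, $c\in\mathbb{R}^n$, and let $\mathcal X=\{x\in\mathbb{R}^n:\,x=S_0^w(P'x+c)\}$. Then there exists a partition $\mathcal V=\{1,\dots,n\}=\mathcal V_+\cup\mathcal V_0\cup\mathcal V_-$ such that (i) every equilibrium $x\in\mathcal X$ satisfies $x_{\mathcal V_-}=0$, $x_{\mathcal V_+}=w_{\mathcal V_+}$, and $x_i=c_i+\sum_{j}P_{ji}x_j$ for every $i\in\mathcal V_0$; (ii) for any two equilibria $x^{(1)},x^{(2)}\in\mathcal X$, $x^{(1)}_{\mathcal V_-}=x^{(2)}_{\mathcal V_-}$ and $x^{(1)}_{\mathcal V_+}=x^{(2)}_{\mathcal V_+}$.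
   Context: $P$ sub-stochastic: nonnegative with $P\mathbbm{1}\le\mathbbm{1}$. $(S_0^w(x))_i=\min\{\max\{x_i,0\},w_i\}$; $P'$ is the transpose. For a vector $v$ and $\mathcal A\subseteq\{1,\dots,n\}$, $v_{\mathcal A}$ is the subvector indexed by $\mathcal A$. *)

From HB Require Import structures.
From mathcomp Require Import all_boot all_order all_algebra.
From mathcomp Require Import reals.
Set Implicit Arguments. Unset Strict Implicit. Unset Printing Implicit Defensive.
Import Order.TTheory GRing.Theory Num.Theory.
Local Open Scope ring_scope.

Definition substochastic (R : realType) (n : nat) (P : 'M[R]_n) : Prop :=
  (forall i j, 0 <= P i j) /\ (forall i, \sum_(j < n) P i j <= 1).

Definition S0 (R : realType) (n : nat) (w y : 'cV[R]_n) : 'cV[R]_n :=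
  \col_i Num.min (Num.max (y i 0) 0) (w i 0).

Definition equilibrium (R : realType) (n : nat) (P : 'M[R]_n) (w c x : 'cV[R]_n)
  : Prop := x = S0 w (P^T *m x + c).

(** Clipping to [[0, w_i]] is 1-Lipschitz in each coordinate and a sub-stochastic
    [P'] does not increase the l1 norm, so for two equilibria [x], [x'] with
    inputs [y = P'x + c], [y' = P'x' + c] we get
    [sum |x - x'| <= sum |y - y'| <= sum |x - x'|], whence
    [|x_i - x'_i| = |y_i - y'_i|] for every [i].  Where the clipping is active,
    i.e. [x_i <> y_i], a clipped pair can only keep its distance if [y_i = y'_i],
    so all equilibria agree there.  Hence the coordinates clipped to [0] by some
    equilibrium form [V_-], the other clipped ones [V_+], and on the remaining
    ones every equilibrium satisfies [x_i = y_i]. *)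

From mathcomp Require Import all_boot all_order all_algebra.
From mathcomp Require Import reals.
From mathcomp Require Import boolp lra.
Set Implicit Arguments. Unset Strict Implicit. Unset Printing Implicit Defensive.
Import Order.TTheory GRing.Theory Num.Theory.
Local Open Scope ring_scope.

Lemma ler_sum_eq (R : numDomainType) (I : finType) (f g : I -> R) :
  (forall i, f i <= g i) -> \sum_i g i <= \sum_i f i -> forall i, f i = g i.
Proof.
move=> le_fg le_sum i.
have [_ eq_sum] := leif_sum (fun i (_ : true) => leif_eq (le_fg i)).
have /eqP : \sum_i f i = \sum_i g i by apply/le_anti; rewrite le_sum ler_sum.
by rewrite eq_sum => /forall_inP/(_ i isT)/eqP.
Qed.

Lemma partition3 (T : finType) (A B : {set T}) : B \subset A ->
  [/\ [disjoint A :\: B & ~: A], [disjoint A :\: B & B], [disjoint ~: A & B]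
    & A :\: B :|: ~: A :|: B = [set: T]].
Proof.
move=> /subsetP sBA; split; last first.
  by apply/setP => i; rewrite !inE; case: (i \in A); case: (i \in B).
all: rewrite -setI_eq0; apply/eqP/setP => i; rewrite !inE.
all: by case: (boolP (i \in B)) => [/sBA -> | _]; case: (i \in A).
Qed.

Section Clip.
Variables (R : realDomainType) (w : R).
Hypothesis w_ge0 : 0 <= w.

Definition clip (a : R) := Num.min (Num.max a 0) w.

Variant clip_spec (a : R) : R -> Type :=
  | ClipLow of a <= 0 : clip_spec a 0
  | ClipId of 0 <= a <= w : clip_spec a a
  | ClipHigh of w <= a : clip_spec a w.

Lemma clipP a : clip_spec a (clip a).
Proof.
rewrite /clip; have [a_le0|a_gt0] := leP a 0; first by rewrite min_l //; apply: ClipLow.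
have [a_lew|a_gtw] := leP a w; first by apply: ClipId; rewrite a_lew ltW.
by apply: ClipHigh; rewrite ltW.
Qed.

Lemma clip_boundary a : clip a != a -> clip a = 0 \/ clip a = w.
Proof. by case: clipP; [left | rewrite eqxx | right]. Qed.

Lemma clip_lipschitz a b : `|clip a - clip b| <= `|a - b|.
Proof.
move: w_ge0; case: (ger0P (a - b)); case: (ger0P (clip a - clip b)).
all: by case: (clipP a); case: (clipP b) => *; lra.
Qed.

Lemma clip_dist_eq a b : clip a != a -> `|clip a - clip b| = `|a - b| -> a = b.
Proof.
move: w_ge0; case: (ger0P (a - b)); case: (ger0P (clip a - clip b)).
all: case: (clipP a); case: (clipP b); rewrite ?eqxx // => *.
all: by apply/eqP; rewrite eq_le; apply/andP; split; lra.
Qed.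

End Clip.

Section Equilibria.
Variables (R : realType) (n : nat) (P : 'M[R]_n) (w c : 'cV[R]_n).
Hypotheses (P_sub : substochastic P) (w_ge0 : forall i, 0 <= w i 0).

Definition drive (x : 'cV[R]_n) (i : 'I_n) := c i 0 + \sum_j P j i * x j 0.

Lemma equilibriumE x : equilibrium P w c x ->
  forall i, x i 0 = clip (w i 0) (drive x i).
Proof.
move=> eq_x i; rewrite {1}eq_x /S0 /clip /drive !mxE addrC.
by congr (Num.min (Num.max (_ + _) 0) _); apply: eq_bigr => j _; rewrite mxE.
Qed.

Lemma drive_dist_sum x x' :
  \sum_i `|drive x i - drive x' i| <= \sum_j `|x j 0 - x' j 0|.
Proof.
have [P_ge0 P_row] := P_sub.
have drive_dist i : `|drive x i - drive x' i| <= \sum_j P j i * `|x j 0 - x' j 0|.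
  rewrite /drive opprD addrACA subrr add0r -sumrB.
  apply: le_trans (ler_norm_sum _ _ _) _; apply: ler_sum => j _.
  by rewrite -mulrBr normrM ger0_norm.
apply: le_trans (ler_sum _ (fun i _ => drive_dist i)) _.
rewrite exchange_big /=; apply: ler_sum => j _.
by rewrite -mulr_suml ler_piMl.
Qed.

Lemma equilibrium_dist_eq x x' :
  equilibrium P w c x -> equilibrium P w c x' ->
  forall i, `|x i 0 - x' i 0| = `|drive x i - drive x' i|.
Proof.
move=> eq_x eq_x'; apply: ler_sum_eq; last exact: drive_dist_sum.
by move=> i; rewrite (equilibriumE eq_x) (equilibriumE eq_x') clip_lipschitz.
Qed.

Lemma equilibria_agree_clipped x x' i :
  equilibrium P w c x -> equilibrium P w c x' ->
  x i 0 != drive x i -> x' i 0 = x i 0.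
Proof.
move=> eq_x eq_x'; have := equilibrium_dist_eq eq_x eq_x' i.
rewrite (equilibriumE eq_x) (equilibriumE eq_x') => dist_eq clipped.
by rewrite (clip_dist_eq (w_ge0 i) clipped dist_eq).
Qed.

Definition clipped := [set i | `[< exists2 x, equilibrium P w c x & x i 0 != drive x i >]].

Definition clipped_to_0 :=
  [set i | `[< exists2 x, equilibrium P w c x & (x i 0 != drive x i) && (x i 0 == 0) >]].

Lemma clipped_to_0_sub : clipped_to_0 \subset clipped.
Proof.
apply/subsetP => i; rewrite !inE => /asboolP[x eq_x /andP[clip_x _]].
by apply/asboolP; exists x.
Qed.

Lemma equilibrium_on_partition x : equilibrium P w c x ->
  [/\ forall i, i \in clipped_to_0 -> x i 0 = 0,
      forall i, i \in clipped :\: clipped_to_0 -> x i 0 = w i 0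
    & forall i, i \in ~: clipped -> x i 0 = c i 0 + \sum_j P j i * x j 0].
Proof.
move=> eq_x; split=> i.
- rewrite inE => /asboolP[x0 eq_x0 /andP[clip_x0 /eqP x0_0]].
  by rewrite (equilibria_agree_clipped eq_x0 eq_x clip_x0).
- rewrite !inE => /andP[/asboolPn not_to0 /asboolP[x1 eq_x1 clip_x1]].
  rewrite (equilibria_agree_clipped eq_x1 eq_x clip_x1) (equilibriumE eq_x1).
  move: (clip_x1); rewrite {1}(equilibriumE eq_x1).
  case/(clip_boundary (w_ge0 i)) => [x1_0|->] //.
  by case: not_to0; exists x1; rewrite // clip_x1 /= (equilibriumE eq_x1) x1_0.
- rewrite !inE => /asboolPn not_clipped; apply/eqP; apply: contraT => clip_x.
  by case: not_clipped; exists x.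
Qed.

End Equilibria.

Theorem corollary1 (R : realType) (n : nat) (P : 'M[R]_n) (w c : 'cV[R]_n) :
  substochastic P -> (forall i, 0 <= w i 0) ->
  exists Vp V0 Vm : {set 'I_n},
    [/\ [disjoint Vp & V0], [disjoint Vp & Vm], [disjoint V0 & Vm]
      & Vp :|: V0 :|: Vm = [set: 'I_n]] /\
    (forall x : 'cV[R]_n, equilibrium P w c x ->
       [/\ forall i, i \in Vm -> x i 0 = 0,
           forall i, i \in Vp -> x i 0 = w i 0
         & forall i, i \in V0 -> x i 0 = c i 0 + \sum_(j < n) P j i * x j 0]) /\
    (forall x1 x2 : 'cV[R]_n, equilibrium P w c x1 -> equilibrium P w c x2 ->
       (forall i, i \in Vm -> x1 i 0 = x2 i 0) /\
       (forall i, i \in Vp -> x1 i 0 = x2 i 0)).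
Proof.
move=> P_sub w_ge0.
exists (clipped P w c :\: clipped_to_0 P w c), (~: clipped P w c), (clipped_to_0 P w c).
split; first by apply: partition3; apply: clipped_to_0_sub.
have on_part := equilibrium_on_partition (c := c) P_sub w_ge0.
split; first exact: on_part.
move=> x1 x2 eq1 eq2; have [m1 p1 _] := on_part _ eq1; have [m2 p2 _] := on_part _ eq2.
by split=> i i_in; [rewrite m1 // m2 | rewrite p1 // p2].
Qed.
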